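(* Let $N\ge4$ and $\kappa\in\mathbb R$ be such that the $(N-1)^2\times(N-1)^2$ matrix $\tilde A=M\otimes M^{-1}+M^{-1}\otimes M+2I\otimes I+\kappa(I\otimes M+M\otimes I)$ is nonsingular, and let $A=M\otimes S+S\otimes M+2I\otimes I+\kappa(I\otimes M+M\otimes I)$. Then the eigenspace $\{\boldsymbol v\in\mathbb R^{(N-1)^2}:\tilde A^{-1}A\boldsymbol v=\boldsymbol v\}$ of $\tilde A^{-1}A$ associated with the eigenvalue $1$ has dimension $(N-3)^2$.
   Context: $M,S$ are the $(N-1)\times(N-1)$ matrices $M_{mn}=(\psi_{n+1},\psi_{m+1})$, $S_{mn}=(\phi_n',\phi_m')$ with $(\cdot,\cdot)$ the $L^2(-1,1)$ inner product, $L_n$ the Legendre polynomial of degree $n$, $P_n^{(-1,-1)}=\frac{n-1}{2(2n-1)}(L_n-L_{n-2})$ ($n\ge2$), $\psi_{m+1}=\frac{\sqrt{2(2m+1)}}{m}P_{m+1}^{(-1,-1)}$, $\phi_m=\sqrt{\frac{2m+1}{2}}L_m$. $I$ is the $(N-1)\times(N-1)$ identity and $\otimes$ the Kronecker product. ($A$ is the matrix of the divergence-free spectral Galerkin discretisation of the 2D curl-curl problem $\nabla\times\nabla\times\boldsymbol u+\kappa\boldsymbol u=\boldsymbol f$ in the basis $\{\boldsymbol\Phi_{m,n}\}$, and $\tilde A$ is obtained by replacing $S$ by $M^{-1}$.) *)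

From HB Require Import structures.
From mathcomp Require Import all_boot all_order all_algebra.
From mathcomp Require Import all_classical all_reals all_analysis.
From mathcomp Require Export mxtens.
Set Implicit Arguments. Unset Strict Implicit. Unset Printing Implicit Defensive.
Import Order.TTheory GRing.Theory Num.Theory.
Local Open Scope ring_scope.

Section Defs.
Variable R : realType.

(* Legendre polynomials via Bonnet's recursion:
   L_0 = 1, L_1 = X, (n+2) L_{n+2} = (2n+3) X L_{n+1} - (n+1) L_n. *)
Fixpoint legendre_pair (n : nat) : {poly R} * {poly R} :=
  match n with
  | 0%N => (1, 'X)
  | k.+1 => let: (a, b) := legendre_pair k in
            (b, (k.+2%:R)^-1 *: ((2 * k%:R + 3) *: ('X * b) - (k.+1%:R) *: a))
  end.
Definition legendre (n : nat) : {poly R} := (legendre_pair n).1.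

Definition L2ip (p q : {poly R}) : R :=
  Rintegral (@lebesgue_measure R) `[(-1)%R, 1%R]%classic
            (fun x => p.[x] * q.[x]).

Definition jacobim1 (n : nat) : {poly R} :=
  ((n%:R - 1) / (2 * (2 * n%:R - 1))) *: (legendre n - legendre (n - 2)).

(* psi_{m+1} = sqrt(2(2m+1))/m * P_{m+1}^{(-1,-1)}, m >= 1 *)
Definition psi (m : nat) : {poly R} :=
  (Num.sqrt (2 * (2 * m%:R + 1)) / m%:R) *: jacobim1 m.+1.

Definition phi (m : nat) : {poly R} :=
  Num.sqrt ((2 * m%:R + 1) / 2) *: legendre m.

(* Indices m, n range over 1..N-1; i : 'I_(N-1) stands for m = i+1. *)
Definition massM (N : nat) : 'M[R]_(N - 1) :=
  \matrix_(i, j) L2ip (psi j.+1) (psi i.+1).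

Definition stiffS (N : nat) : 'M[R]_(N - 1) :=
  \matrix_(i, j) L2ip (phi j.+1)^`() (phi i.+1)^`().

Definition I_ (N : nat) : 'M[R]_(N - 1) := 1%:M.

Definition Atilde (N : nat) (kappa : R) : 'M[R]_((N - 1) * (N - 1)) :=
  massM N *t invmx (massM N) + invmx (massM N) *t massM N
  + 2%:R *: (I_ N *t I_ N) + kappa *: (I_ N *t massM N + massM N *t I_ N).

Definition Amat (N : nat) (kappa : R) : 'M[R]_((N - 1) * (N - 1)) :=
  massM N *t stiffS N + stiffS N *t massM N
  + 2%:R *: (I_ N *t I_ N) + kappa *: (I_ N *t massM N + massM N *t I_ N).

(* dimension of {v (column vector) : B v = v} *)
Definition eig1_dim (n : nat) (B : 'M[R]_n) : nat :=
  \rank (kermx (B - 1%:M)^T).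

End Defs.

From mathcomp Require Import all_boot all_order all_algebra.
From mathcomp Require Import all_classical all_reals all_analysis.
From HB Require Import structures.
From mathcomp Require Import zify ring lra.
Set Implicit Arguments. Unset Strict Implicit. Unset Printing Implicit Defensive.
Import Order.TTheory GRing.Theory Num.Theory.
Import numFieldNormedType.Exports.
Local Open Scope ring_scope.

(* Write n = N - 1. The matrices M and S are the Gram matrices Psi Psi^T and Q Q^T of
   the coordinates of psi_2, ..., psi_N and phi_1', ..., phi_n' in the orthonormal
   Legendre basis phi_0, ..., phi_N. Integration by parts (psi_(m+1)' = phi_m, and
   psi_(m+1) vanishes at +-1) gives Psi Q^T = -1, hence S - M^-1 = Y Y^T, where Y is
   the component of Q orthogonal to the n rows of Psi. The rows of Y lie in a plane,
   and their values at +-1 (those of Q) already have rank 2, so Y has rank 2.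
   Finally the 1-eigenspace of Atilde^-1 A is ker (A - Atilde) = ker (M (x) D + D (x) M)
   with D = S - M^-1: both terms are positive semidefinite and M is invertible, so this
   kernel is ker D (x) ker D, of dimension (n - 2)^2 = (N - 3)^2. *)

Section Gram.
Variable R : realFieldType.

Lemma dotmx_eq0 p (v : 'rV[R]_p) : ((v *m v^T) 0 0 == 0) = (v == 0).
Proof.
apply/idP/eqP => [|->]; last by rewrite mul0mx mxE.
rewrite mxE psumr_eq0 => [/allP v0|j _]; last by rewrite mxE -expr2 sqr_ge0.
apply/rowP => j; have /implyP := v0 j (mem_index_enum j).
by rewrite !mxE -expr2 sqrf_eq0 => /(_ isT)/eqP.
Qed.

Lemma mulmx_gram_eq0 m p (u : 'rV[R]_m) (Z : 'M[R]_(m, p)) :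
  (u *m (Z *m Z^T) == 0) = (u *m Z == 0).
Proof.
apply/idP/idP => /eqP uZ; last by rewrite mulmxA uZ mul0mx.
by rewrite -dotmx_eq0 trmx_mul mulmxA -(mulmxA u) uZ mul0mx mxE.
Qed.

Lemma mulmx_gram_add_eq0 m p q (u : 'rV[R]_m) (Z1 : 'M[R]_(m, p)) (Z2 : 'M[R]_(m, q)) :
  u *m (Z1 *m Z1^T + Z2 *m Z2^T) = 0 -> u *m Z1 = 0 /\ u *m Z2 = 0.
Proof.
rewrite -mul_row_col -tr_row_mx => /eqP.
by rewrite mulmx_gram_eq0 mul_mx_row -row_mx0 => /eqP/eq_row_mx.
Qed.

Lemma mxrank_gram m p (Z : 'M[R]_(m, p)) : \rank (Z *m Z^T) = \rank Z.
Proof.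
apply/eqP; rewrite eqn_leq mxrankM_maxl /=.
have : (\rank (kermx (Z *m Z^T)) <= \rank (kermx Z))%N.
  apply/mxrankS/row_subP => i; apply/sub_kermxP/eqP.
  by rewrite -mulmx_gram_eq0 -row_mul mulmx_ker row0.
by rewrite !mxrank_ker leq_sub2lE ?rank_leq_row.
Qed.

End Gram.

Section Vectorization.
Variable R : comPzRingType.

Lemma tensmx11 m n : (1%:M : 'M[R]_m) *t (1%:M : 'M[R]_n) = 1%:M.
Proof.
apply/matrixP => i j.
case: (mxtens_indexP i) => a b; case: (mxtens_indexP j) => c d.
rewrite tensmxE !mxE (inj_eq (can_inj (@mxtens_indexK m n))) xpair_eqE.
by case: (a == c); case: (b == d); rewrite ?mulr1 ?mulr0.
Qed.

(* Row-major vectorization, in the index order used by [*t]. *)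
Definition vecm m n (U : 'M[R]_(m, n)) : 'rV[R]_(m * n) :=
  \row_k U (mxtens_unindex k).1 (mxtens_unindex k).2.

Definition unvecm m n (u : 'rV[R]_(m * n)) : 'M[R]_(m, n) :=
  \matrix_(i, j) u 0 (mxtens_index (i, j)).

Lemma unvecmK m n : cancel (@unvecm m n) (@vecm m n).
Proof.
move=> u; apply/rowP => k; rewrite !mxE.
by case: (mxtens_unindex k) (mxtens_unindexK k) => i j /= ->.
Qed.

Lemma vecmK m n : cancel (@vecm m n) (@unvecm m n).
Proof. by move=> U; apply/matrixP => i j; rewrite !mxE mxtens_indexK. Qed.

Lemma vecm_inj m n : injective (@vecm m n).
Proof. exact: can_inj (@vecmK m n). Qed.

Lemma vecm0 m n : vecm (0 : 'M[R]_(m, n)) = 0.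
Proof. by apply/rowP => k; rewrite !mxE. Qed.

Lemma vecm_mul_tens m n p q (U : 'M[R]_(m, n)) (A : 'M[R]_(m, p)) (B : 'M[R]_(n, q)) :
  vecm U *m (A *t B) = vecm (A^T *m U *m B).
Proof.
apply/rowP => k; case: (mxtens_indexP k) => a b.
rewrite !mxE mxtens_indexK /= (reindex (@mxtens_index m n)) /=; last first.
  by apply: onW_bij; exists (@mxtens_unindex m n);
    [exact: mxtens_indexK | exact: mxtens_unindexK].
have -> : forall G : 'I_m * 'I_n -> R, \sum_x G x = \sum_i \sum_j G (i, j).
  by move=> G; rewrite pair_bigA; apply: eq_bigr => -[].
rewrite exchange_big /=; apply: eq_bigr => j _.
rewrite !mxE big_distrl /=; apply: eq_bigr => i _.
by rewrite !mxE !mxtens_indexK /= mulrA [U i j * _]mulrC.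
Qed.

End Vectorization.

Section TensorKernel.
Variable R : fieldType.

Lemma row_free_tens m n p q (A : 'M[R]_(m, n)) (B : 'M[R]_(p, q)) :
  row_free A -> row_free B -> row_free (A *t B).
Proof.
move=> /row_freeP[A' AA'] /row_freeP[B' BB']; apply/row_freeP.
by exists (A' *t B'); rewrite tensmx_mul AA' BB' tensmx11.
Qed.

Lemma two_sided_kernel n (D U : 'M[R]_n) : D^T = D -> U *m D = 0 -> D *m U = 0 ->
  exists C, U = (row_base (kermx D))^T *m C *m row_base (kermx D).
Proof.
set K := row_base (kermx D) => DT UD DU.
have subK k (X : 'M[R]_(k, n)) : X *m D = 0 -> (X <= K)%MS.
  by move=> XD; rewrite eq_row_base; apply/sub_kermxP.
have [K' KK'] := row_freeP (row_base_free (kermx D)).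
have [X defU] := submxP (subK _ _ UD).
have XD : X^T *m D = 0.
  have DX : D *m X = 0 by rewrite -[D *m X]mulmx1 -KK' mulmxA -(mulmxA D) -defU DU mul0mx.
  by rewrite -[X^T *m D]trmxK trmx_mul trmxK DT DX trmx0.
have [C defX] := submxP (subK _ _ XD).
by exists C^T; rewrite defU -[X]trmxK defX trmx_mul.
Qed.

Lemma sub_tens_kermx n (D : 'M[R]_n) (u : 'rV[R]_(n * n)) : D^T = D ->
  u *m (1%:M *t D) = 0 -> u *m (D *t 1%:M) = 0 ->
  (u <= row_base (kermx D) *t row_base (kermx D))%MS.
Proof.
move=> DT; rewrite -(unvecmK u) !vecm_mul_tens trmx1 mul1mx mulmx1 DT -(vecm0 R n n).
move=> /vecm_inj UD /vecm_inj DU; have [C ->] := two_sided_kernel DT UD DU.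
by rewrite -vecm_mul_tens submxMl.
Qed.

End TensorKernel.

Section GramTensorSum.
Variable R : realFieldType.

Lemma gram_tens m n p q (A : 'M[R]_(m, p)) (B : 'M[R]_(n, q)) :
  (A *t B) *m (A *t B)^T = (A *m A^T) *t (B *m B^T).
Proof. by rewrite trmx_tens tensmx_mul. Qed.

Lemma mxrank_ker_tens_gram_sum n p q (H : 'M[R]_(n, p)) (Y : 'M[R]_(n, q)) :
  H *m H^T \in unitmx ->
  \rank (kermx ((H *m H^T) *t (Y *m Y^T) + (Y *m Y^T) *t (H *m H^T)))
  = (\rank (kermx (Y *m Y^T)) ^ 2)%N.
Proof.
set M := H *m H^T; set D := Y *m Y^T; set K := row_base (kermx D) => uM.
have KD : K *m D = 0 by apply/sub_kermxP; rewrite eq_row_base.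
have DT : D^T = D by rewrite trmx_mul trmxK.
have fM : row_free M by rewrite row_free_unit.
have f1 : row_free (1%:M : 'M[R]_n) by rewrite row_free_unit unitmx1.
have ker_sub : (kermx (M *t D + D *t M) <= K *t K)%MS.
  apply/row_subP => i; set u := row i _.
  have : u *m (M *t D + D *t M) = 0 by rewrite -row_mul mulmx_ker row0.
  rewrite -!gram_tens => /mulmx_gram_add_eq0[uHY uYH].
  have uMD : u *m (M *t D) = 0 by rewrite -gram_tens mulmxA uHY mul0mx.
  have uDM : u *m (D *t M) = 0 by rewrite -gram_tens mulmxA uYH mul0mx.
  apply: sub_tens_kermx => //; apply/eqP.
  - rewrite -(mulmx_free_eq0 _ (row_free_tens fM f1)) -mulmxA tensmx_mul.
    by rewrite mul1mx mulmx1 uMD.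
  - rewrite -(mulmx_free_eq0 _ (row_free_tens f1 fM)) -mulmxA tensmx_mul.
    by rewrite mul1mx mulmx1 uDM.
have sub_ker : (K *t K <= kermx (M *t D + D *t M))%MS.
  by apply/sub_kermxP; rewrite mulmxDr !tensmx_mul KD tensmx0 tens0mx addr0.
rewrite expnS expn1 -(eqP (row_free_tens (row_base_free _) (row_base_free _))).
by apply/eqmx_rank/andP.
Qed.

End GramTensorSum.

Section Biorthogonal.
Variable R : realFieldType.

(* When [P *m Q^T = -1], this is [Q] minus its orthogonal projection onto the
   row space of [P]. *)
Definition biorth_residual n p (P Q : 'M[R]_(n, p)) : 'M[R]_(n, p) :=
  Q + invmx (P *m P^T) *m P.

Variables (n p : nat) (P Q : 'M[R]_(n, p)).
Hypothesis PQ : P *m Q^T = - 1%:M.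

Lemma mxrank_biorth : \rank P = n.
Proof.
apply/eqP; rewrite eqn_leq rank_leq_row /=.
by rewrite -{1}(mxrank1 R n) -mxrank_opp -PQ mxrankM_maxl.
Qed.

Lemma gram_unit_biorth : P *m P^T \in unitmx.
Proof. by rewrite -row_free_unit /row_free mxrank_gram mxrank_biorth. Qed.

Lemma biorth_residual_orth : biorth_residual P Q *m P^T = 0.
Proof.
have QP : Q *m P^T = - 1%:M.
  by rewrite -[Q]trmxK -trmx_mul PQ; apply/matrixP => i j; rewrite !mxE eq_sym.
by rewrite mulmxDl QP -mulmxA mulVmx ?gram_unit_biorth // addNr.
Qed.

Lemma gram_sub_inv_gram :
  Q *m Q^T - invmx (P *m P^T) = biorth_residual P Q *m (biorth_residual P Q)^T.
Proof.
set Mi := invmx (P *m P^T).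
have MiT : Mi^T = Mi by rewrite trmx_inv trmx_mul trmxK.
rewrite {2}/biorth_residual linearD /= trmx_mul MiT mulmxDr mulmxA.
rewrite biorth_residual_orth mul0mx addr0.
by rewrite /biorth_residual mulmxDl -mulmxA PQ mulmxN mulmx1.
Qed.

Lemma mxrank_biorth_residual (E : 'M[R]_(2, p)) : (p <= n.+2)%N ->
  P *m E^T = 0 -> (2 <= \rank (Q *m E^T))%N -> \rank (biorth_residual P Q) = 2.
Proof.
move=> le_p PE rQE; apply/eqP; rewrite eqn_leq; apply/andP; split.
  have /mxrankS : (biorth_residual P Q <= kermx P^T)%MS.
    by apply/sub_kermxP; exact: biorth_residual_orth.
  rewrite mxrank_ker mxrank_tr mxrank_biorth => le_Y.
  by apply: leq_trans le_Y _; rewrite leq_subLR addn2.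
apply: leq_trans rQE _.
have -> : Q *m E^T = biorth_residual P Q *m E^T.
  by rewrite mulmxDl -mulmxA PE mulmx0 addr0.
exact: mxrankM_maxl.
Qed.

End Biorthogonal.

Section LegendreRecurrences.
Variable R : realType.
Local Notation L n := (legendre R n).

Lemma natrS_poly_neq0 k : (k.+1%:R : {poly R}) != 0.
Proof. by rewrite -polyC_natr polyC_eq0 pnatr_eq0. Qed.

Lemma legendre0 : L 0 = 1. Proof. by []. Qed.

Lemma legendre_pairE n : legendre_pair R n = (L n, L n.+1).
Proof. by rewrite /legendre /=; case: (legendre_pair R n). Qed.

Lemma legendre1 : L 1 = 'X. Proof. by rewrite /legendre /=. Qed.

Lemma legendreSS n :
  n.+2%:R * L n.+2 = (2 * n + 3)%:R * ('X * L n.+1) - n.+1%:R * L n.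
Proof.
rewrite [L n.+2]/legendre /= legendre_pairE /= -!mul_polyC (mulrA n.+2%:R).
have -> : (n.+2%:R : {poly R}) * (n.+2%:R^-1)%:P = 1.
  by rewrite -polyC_natr -polyCM mulfV ?pnatr_eq0.
by rewrite mul1r; ring.
Qed.

Lemma mulX_legendre k :
  (2 * k + 1)%:R * ('X * L k) = k.+1%:R * L k.+1 + k%:R * L k.-1.
Proof.
case: k => [|k]; first by rewrite legendre0 legendre1; ring.
by rewrite legendreSS; ring.
Qed.

Lemma deriv_legendreSS_rec k : k.+2%:R * (L k.+2)^`() =
  (2 * k + 3)%:R * (L k.+1 + 'X * (L k.+1)^`()) - k.+1%:R * (L k)^`().
Proof.
have := congr1 deriv (legendreSS k).
by rewrite !mulr_natl derivB !derivMn derivM derivX mul1r => ->; ring.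
Qed.

Lemma mulX_deriv_legendre n : 'X * (L n.+1)^`() = (L n)^`() + n.+1%:R * L n.+1.
Proof.
have dL k : 'X * (L k.+1)^`() = (L k)^`() + k.+1%:R * L k.+1 ->
    (L k.+2)^`() = (L k)^`() + (2 * k + 3)%:R * L k.+1.
  move=> IH; apply: (mulfI (natrS_poly_neq0 k.+1)).
  by rewrite deriv_legendreSS_rec IH; ring.
suff [] : 'X * (L n.+1)^`() = (L n)^`() + n.+1%:R * L n.+1 /\
          'X * (L n.+2)^`() = (L n.+1)^`() + n.+2%:R * L n.+2 by [].
elim: n => [|n [IH1 IH2]].
  have d1 : (L 1)^`() = 1 by rewrite legendre1 derivX.
  have d2 : (L 2)^`() = 3%:R * 'X.
    by rewrite (dL 0) ?legendre0 ?d1 ?derivC ?legendre1; ring.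
  by rewrite d1 d2 legendre0 derivC legendreSS legendre1 legendre0; split; ring.
split=> //; rewrite (dL n.+1 IH2) mulrDr IH1 (dL n IH1).
by have := legendreSS n.+1 => ->; ring.
Qed.

Lemma deriv_legendreSS n : (L n.+2)^`() = (L n)^`() + (2 * n + 3)%:R * L n.+1.
Proof.
apply: (mulfI (natrS_poly_neq0 n.+1)).
by rewrite deriv_legendreSS_rec mulX_deriv_legendre; ring.
Qed.

Lemma horner_natr k (x : R) : (k%:R : {poly R}).[x] = k%:R.
Proof. by rewrite -polyC_natr hornerC. Qed.

Lemma legendre_at_pm1 n : (L n).[1] = 1 /\ (L n).[-1] = (-1) ^+ n.
Proof.
suff: ((L n).[1] = 1 /\ (L n).[-1] = (-1) ^+ n) /\
      ((L n.+1).[1] = 1 /\ (L n.+1).[-1] = (-1) ^+ n.+1) by case.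
elim: n => [|n [[IH1 IH1'] [IH2 IH2']]].
  by rewrite legendre0 legendre1 !hornerE.
have n2_neq0 : (n.+2%:R : R) != 0 by rewrite pnatr_eq0.
split=> //; have := legendreSS n.
move=> /(congr1 (fun p => (p.[1], p.[-1]))) /pair_equal_spec[].
rewrite !(hornerD, hornerN) !hornerM !horner_natr !hornerX IH1 IH1' IH2 IH2'.
move=> at1 atN1; split; apply: (mulfI n2_neq0).
  by rewrite at1; ring.
by rewrite atN1 !exprS; ring.
Qed.

Lemma size_legendre n : size (L n) = n.+1.
Proof.
suff: size (L n) = n.+1 /\ size (L n.+1) = n.+2 by case.
elim: n => [|n [IH1 IH2]]; first by rewrite legendre0 legendre1 size_poly1 size_polyX.
split=> //.
have sizeXL : size ((2 * n + 3)%:R * ('X * L n.+1)) = n.+3.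
  rewrite -polyC_natr size_Cmul ?pnatr_eq0 ?addn3 // mulrC.
  by rewrite size_mulX -?size_poly_eq0 IH2.
have sizeL : size (n.+1%:R * L n) = n.+1 by rewrite -polyC_natr size_Cmul ?pnatr_eq0.
have : size (n.+2%:R * L n.+2) = n.+3.
  by rewrite legendreSS size_polyDl ?sizeXL // size_polyN sizeL ltnS ltnW.
by rewrite -polyC_natr size_Cmul ?pnatr_eq0.
Qed.

End LegendreRecurrences.

Section PolyIntegral.
Variable R : realType.

Definition int_poly (p : {poly R}) : R :=
  Rintegral (@lebesgue_measure R) `[(-1)%R, 1%R]%classic (fun x => p.[x]).

Lemma int_poly_deriv p : int_poly p^`() = p.[1] - p.[-1].
Proof.
rewrite /int_poly /Rintegral (@continuous_FTC2 _ _ (horner p)).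
- by rewrite -EFinB.
- by rewrite gtrN // ltr01.
- by apply: continuous_subspaceT; exact: continuous_horner.
- split=> [x _| |].
  + exact: derivable_horner.
  + by apply: cvg_at_right_filter; exact: continuous_horner.
  + by apply: cvg_at_left_filter; exact: continuous_horner.
- by move=> x _; rewrite -derivE.
Qed.

Definition antideriv (p : {poly R}) : {poly R} :=
  \poly_(i < (size p).+1) (if i is j.+1 then p`_j / j.+1%:R else 0).

Lemma antiderivK p : (antideriv p)^`() = p.
Proof.
apply/polyP => i; rewrite coef_deriv coef_poly ltnS.
case: ltnP => [_|le_p_i]; last by rewrite mul0rn nth_default.
by rewrite -(mulr_natr (p`_i / _)) divfK ?pnatr_eq0.
Qed.

(* Every polynomial is a derivative, so by the FTC [int_poly] is a difference of
   point values; this gives its linearity without any integrability argument. *)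
Lemma int_polyZ c p : int_poly (c *: p) = c * int_poly p.
Proof.
rewrite -[p]antiderivK -derivZ !int_poly_deriv !hornerZ; ring.
Qed.

Lemma int_polyD p q : int_poly (p + q) = int_poly p + int_poly q.
Proof.
rewrite -[p]antiderivK -[q]antiderivK -derivD !int_poly_deriv !hornerD; ring.
Qed.

HB.instance Definition _ :=
  GRing.isSemilinear.Build R {poly R} R _ int_poly (int_polyZ, int_polyD).

Lemma int_poly_natrM k p : int_poly (k%:R * p) = k%:R * int_poly p.
Proof. by rewrite !mulr_natl raddfMn. Qed.

Lemma L2ip_int_poly p q : L2ip p q = int_poly (p * q).
Proof.
by rewrite /L2ip /int_poly; congr Rintegral; apply: funext => x; rewrite hornerM.
Qed.

Lemma int_poly_by_parts f g : f.[1] = 0 -> f.[-1] = 0 ->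
  int_poly (f * g^`()) = - int_poly (f^`() * g).
Proof.
move=> f1 fN1; apply/eqP; rewrite -addr_eq0 -raddfD /= addrC -derivM.
by rewrite int_poly_deriv !hornerM f1 fN1 !mul0r subrr.
Qed.

End PolyIntegral.

Section LegendreOrthogonality.
Variable R : realType.
Local Notation L n := (legendre R n).
Local Notation I := (@int_poly R).

Lemma int_poly_legendre n : I (L n.+1) = 0.
Proof.
have : I ((2 * n + 3)%:R * L n.+1) = 0.
  have -> : (2 * n + 3)%:R * L n.+1 = (L n.+2 - L n)^`().
    by rewrite derivB deriv_legendreSS; ring.
  rewrite int_poly_deriv !(hornerD, hornerN).
  have [[L1 LN1] [L1' LN1']] := (legendre_at_pm1 R n.+2, legendre_at_pm1 R n).
  by rewrite L1 LN1 L1' LN1' !exprS; ring.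
rewrite int_poly_natrM => /eqP.
by rewrite mulf_eq0 pnatr_eq0 addn3 => /eqP.
Qed.

Lemma legendre_mul_rec m n :
  ((2 * n + 3) * m.+1)%:R * (L m.+1 * L n.+1) =
    ((2 * m + 1) * n.+2)%:R * (L m * L n.+2)
  + ((2 * m + 1) * n.+1)%:R * (L m * L n)
  - ((2 * n + 3) * m)%:R * (L m.-1 * L n.+1).
Proof.
have Xm := mulX_legendre R m; have := mulX_legendre R n.+1.
have -> : (2 * n.+1 + 1 = 2 * n + 3)%N by lia.
move=> /= Xn; apply/eqP; rewrite -subr_eq0; apply/eqP.
transitivity ((2 * n + 3)%:R * L n.+1 * (m.+1%:R * L m.+1 + m%:R * L m.-1
                                         - (2 * m + 1)%:R * ('X * L m))
            - (2 * m + 1)%:R * L m * (n.+2%:R * L n.+2 + n.+1%:R * L n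
                                      - (2 * n + 3)%:R * ('X * L n.+1))).
  by rewrite !natrM; ring.
by rewrite Xm Xn !subrr !mulr0 subrr.
Qed.

Lemma int_poly_legendre_orth m n : (m < n)%N -> I (L m * L n) = 0.
Proof.
elim/ltn_ind: m n => m IH [//|n] lt_mn.
case: m IH lt_mn => [|m] IH lt_mn; first by rewrite legendre0 mul1r int_poly_legendre.
have := congr1 I (legendre_mul_rec m n).
rewrite raddfB !raddfD /= !int_poly_natrM (IH m) ?(IH m) ?(IH m.-1) //; try lia.
rewrite !mulr0 addr0 subr0 => /eqP.
by rewrite mulf_eq0 pnatr_eq0 muln_eq0 addn3 => /eqP.
Qed.

Lemma int_poly_legendre_sqr n : I (L n * L n) = 2 / (2 * n + 1)%:R.
Proof.
elim: n => [|n IH].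
  by rewrite legendre0 mulr1 -(derivX R) int_poly_deriv !hornerX opprK divr1.
have := congr1 I (legendre_mul_rec n n).
rewrite raddfB !raddfD /= !int_poly_natrM IH.
rewrite (@int_poly_legendre_orth n n.+2) //.
rewrite (@int_poly_legendre_orth n.-1 n.+1); last by lia.
rewrite !mulr0 add0r subr0 => h.
have n23n1 : (((2 * n + 3) * n.+1)%:R : R) != 0 by rewrite pnatr_eq0 muln_eq0 addn3.
have -> : (2 * n.+1 + 1 = 2 * n + 3)%N by lia.
apply: (mulfI n23n1); rewrite h !natrM; field.
by have := ler0n R n; rewrite !lt0r_neq0 //; lra.
Qed.

Lemma int_poly_legendre_neq k l : k != l -> I (L k * L l) = 0.
Proof.
case: ltngtP => // [lt_kl|lt_lk] _; first exact: int_poly_legendre_orth.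
by rewrite mulrC int_poly_legendre_orth.
Qed.

Lemma phi_orthonormal k l : I (phi R k * phi R l) = (k == l)%:R.
Proof.
rewrite /phi -scalerAl -scalerAr !linearZ /=.
have [<-|neq_kl] := eqVneq k l; last by rewrite int_poly_legendre_neq ?mulr0.
rewrite int_poly_legendre_sqr mulrA -expr2 sqr_sqrtr; last first.
  by apply: divr_ge0 => //; apply: addr_ge0.
by rewrite mulr1n natrD natrM; field; rewrite lt0r_neq0 //; have := ler0n R k; lra.
Qed.

Lemma size_phi k : size (phi R k) = k.+1.
Proof. by rewrite size_scale ?size_legendre // sqrtr_eq0 -ltNge. Qed.

Lemma phi_span K (p : {poly R}) : (size p <= K)%N ->
  exists a : nat -> R, p = \sum_(k < K) a k *: phi R k.
Proof.
elim: K p => [|K IH] p le_pK.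
  by exists (fun=> 0); rewrite big_ord0; exact/size_poly_leq0P.
pose c := p`_K / lead_coef (phi R K).
have lc_neq0 : lead_coef (phi R K) != 0.
  by rewrite lead_coef_eq0 -size_poly_eq0 size_phi.
have lcE : (phi R K)`_K = lead_coef (phi R K) by rewrite lead_coefE size_phi.
have [a Ea] : exists a : nat -> R, p - c *: phi R K = \sum_(k < K) a k *: phi R k.
  apply: IH; apply/leq_sizeP => j; rewrite leq_eqVlt coefB coefZ.
  case/orP=> [/eqP <-|lt_Kj]; first by rewrite lcE divfK ?subrr.
  by rewrite !nth_default ?mulr0 ?subr0 ?size_phi // (leq_trans le_pK).
exists (fun k => if k == K then c else a k).
rewrite big_ord_recr /= eqxx -(subrK (c *: phi R K) p) Ea; congr (_ + _).
by apply: eq_bigr => k _; rewrite ifN // neq_ltn ltn_ord.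
Qed.

Lemma int_poly_phi_coef K (a : nat -> R) (l : 'I_K) :
  I ((\sum_(k < K) a k *: phi R k) * phi R l) = a l.
Proof.
rewrite mulr_suml raddf_sum (bigD1 l) //= big1 ?addr0.
  by rewrite -scalerAl linearZ /= phi_orthonormal eqxx mulr1.
move=> k; rewrite -val_eqE => /negbTE neq_kl.
by rewrite -scalerAl linearZ /= phi_orthonormal neq_kl mulr0.
Qed.

Lemma phi_expand K (p : {poly R}) : (size p <= K)%N ->
  p = \sum_(k < K) I (p * phi R k) *: phi R k.
Proof.
by move=> /phi_span[a ->]; apply: eq_bigr => k _; rewrite int_poly_phi_coef.
Qed.

Lemma int_poly_mul_expand K (f g : {poly R}) : (size f <= K)%N ->
  I (f * g) = \sum_(k < K) I (f * phi R k) * I (g * phi R k).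
Proof.
move=> /phi_expand {1}->; rewrite mulr_suml raddf_sum /=; apply: eq_bigr => k _.
by rewrite -scalerAl linearZ /= [phi R k * g]mulrC.
Qed.

Lemma horner_phi_expand K (f : {poly R}) x : (size f <= K)%N ->
  f.[x] = \sum_(k < K) I (f * phi R k) * (phi R k).[x].
Proof.
move=> /phi_expand {1}->; rewrite horner_sum; apply: eq_bigr => k _.
exact: hornerZ.
Qed.

End LegendreOrthogonality.

Section Psi.
Variable R : realType.
Local Notation L n := (legendre R n).

Lemma psiE m : psi R m.+1 =
  (Num.sqrt (2 * (2 * m.+1%:R + 1)) / (2 * (2 * m.+1%:R + 1))) *: (L m.+2 - L m).
Proof.
rewrite /psi /jacobim1 scalerA !subSS subn0; congr (_ *: _).
have m_ge0 := ler0n R m.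
by rewrite -[m.+2%:R]natr1 -[m.+1%:R]natr1; field; rewrite !lt0r_neq0 //; lra.
Qed.

Lemma deriv_psi m : (psi R m.+1)^`() = phi R m.+1.
Proof.
rewrite psiE derivZ derivB deriv_legendreSS addrAC subrr add0r /phi.
rewrite -polyC_natr mul_polyC scalerA; congr (_ *: _).
set a : R := 2 * m.+1%:R + 1.
have a_gt0 : 0 < a by rewrite /a; have : 0 <= m.+1%:R :> R by []; lra.
have -> : (2 * m + 3)%:R = a by rewrite /a -natr1 natrD natrM; ring.
have -> : Num.sqrt (2 * a) / (2 * a) * a = Num.sqrt (2 * a) / 2.
  by field; rewrite lt0r_neq0.
have a2 : a / 2 = (Num.sqrt (2 * a) / 2) ^+ 2.
  by rewrite expr_div_n sqr_sqrtr ?mulr_ge0 ?ltW //; field.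
by rewrite a2 sqrtr_sqr ger0_norm // divr_ge0 ?sqrtr_ge0.
Qed.

Lemma psi_at_pm1 m : (psi R m.+1).[1] = 0 /\ (psi R m.+1).[-1] = 0.
Proof.
have [[L1 LN1] [L1' LN1']] := (legendre_at_pm1 R m.+2, legendre_at_pm1 R m).
rewrite psiE !hornerZ !(hornerD, hornerN) L1 LN1 L1' LN1' !exprS.
by split; ring.
Qed.

Lemma size_psi m : (size (psi R m.+1) <= m.+3)%N.
Proof.
rewrite psiE; apply: leq_trans (size_scale_leq _ _) _.
apply: leq_trans (size_polyD _ _) _.
by rewrite size_polyN !size_legendre geq_max leqnn /= !ltnS leqW.
Qed.

Lemma size_deriv_phi m : (size (phi R m)^`() <= m)%N.
Proof. by rewrite /deriv size_phi; exact: size_poly. Qed.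

End Psi.

Section PhiCoordinates.
Variables (R : realType) (m K : nat).

(* Coordinates in the orthonormal basis [phi 0], ..., [phi K.-1]; they are exact for
   polynomials of size at most [K]. *)
Definition phi_coord (f : 'I_m -> {poly R}) : 'M[R]_(m, K) :=
  \matrix_(i, k) int_poly (f i * phi R k).

Definition phi_eval_pm1 : 'M[R]_(2, K) := \matrix_(r, k) (phi R k).[(-1) ^+ r].

Lemma mul_phi_coord_tr (f g : 'I_m -> {poly R}) : (forall i, size (f i) <= K)%N ->
  phi_coord f *m (phi_coord g)^T = \matrix_(i, j) int_poly (f i * g j).
Proof.
move=> size_f; apply/matrixP => i j; rewrite !mxE (int_poly_mul_expand _ (size_f i)).
by apply: eq_bigr => k _; rewrite !mxE.
Qed.

Lemma mul_phi_coord_eval (f : 'I_m -> {poly R}) : (forall i, size (f i) <= K)%N ->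
  phi_coord f *m phi_eval_pm1^T = \matrix_(i, r) (f i).[(-1) ^+ r].
Proof.
move=> size_f; apply/matrixP => i r; rewrite !mxE (horner_phi_expand _ (size_f i)).
by apply: eq_bigr => k _; rewrite !mxE.
Qed.

End PhiCoordinates.

Section MassStiffness.
Variables (R : realType) (N : nat).
Local Notation n := (N - 1)%N.

Definition psi_coord : 'M[R]_(n, n.+2) :=
  phi_coord n.+2 (fun i : 'I_n => psi R i.+1).
Definition dphi_coord : 'M[R]_(n, n.+2) :=
  phi_coord n.+2 (fun i : 'I_n => (phi R i.+1)^`()).

Lemma size_psi_row (i : 'I_n) : (size (psi R i.+1) <= n.+2)%N.
Proof. by apply: leq_trans (size_psi R i) _; rewrite !ltnS. Qed.

Lemma size_dphi_row (i : 'I_n) : (size (phi R i.+1)^`() <= n.+2)%N.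
Proof. by apply: leq_trans (size_deriv_phi R i.+1) _; have := ltn_ord i; lia. Qed.

Lemma massM_gram : massM R N = psi_coord *m psi_coord^T.
Proof.
rewrite mul_phi_coord_tr; last exact: size_psi_row.
by apply/matrixP => i j; rewrite !mxE L2ip_int_poly mulrC.
Qed.

Lemma stiffS_gram : stiffS R N = dphi_coord *m dphi_coord^T.
Proof.
rewrite mul_phi_coord_tr; last exact: size_dphi_row.
by apply/matrixP => i j; rewrite !mxE L2ip_int_poly mulrC.
Qed.

Lemma psi_dphi_coord : psi_coord *m dphi_coord^T = - 1%:M.
Proof.
rewrite mul_phi_coord_tr; last exact: size_psi_row.
apply/matrixP => i j; have [psi1 psiN1] := psi_at_pm1 R i.
by rewrite !mxE int_poly_by_parts // deriv_psi phi_orthonormal.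
Qed.

Lemma psi_coord_eval : psi_coord *m (phi_eval_pm1 R n.+2)^T = 0.
Proof.
rewrite mul_phi_coord_eval; last exact: size_psi_row.
apply/matrixP => i r; have [psi1 psiN1] := psi_at_pm1 R i.
by rewrite !mxE; case: r => [[|[|//]]] /=; rewrite ?expr0 ?expr1.
Qed.

Lemma rank_dphi_coord_eval : (2 <= n)%N ->
  (2 <= \rank (dphi_coord *m (phi_eval_pm1 R n.+2)^T))%N.
Proof.
move=> le2n; rewrite mul_phi_coord_eval; last exact: size_dphi_row.
pose s k : R := Num.sqrt ((2 * k%:R + 1) / 2).
have s_neq0 k : s k != 0.
  by rewrite sqrtr_eq0 -ltNge; have := ler0n R k; lra.
have dphi1 x : ((phi R 1)^`()).[x] = s 1.
  by rewrite derivZ legendre1 derivX hornerZ hornerC mulr1.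
have dphi2 x : ((phi R 2)^`()).[x] = s 2 * (3 * x).
  rewrite derivZ (deriv_legendreSS R 0) legendre0 legendre1 derivC add0r.
  by rewrite hornerZ hornerM hornerX horner_natr.
(* The inverse of [[s 1, s 1], [3 s 2, -3 s 2]], the values of phi_1', phi_2' at 1, -1. *)
pose B : 'M[R]_2 :=
  \matrix_(r, b) (if b == 0 then (2 * s 1)^-1 else (-1) ^+ r / (6 * s 2)).
apply: (@mulmx1_min_rank _ _ _ _ _ (rowsub (widen_ord le2n) 1%:M) B).
rewrite -rowsubE; apply/matrixP => a b.
rewrite !mxE !big_ord_recr big_ord0 /= add0r !mxE /=.
case: a => [[|[|//]]] ?; case: b => [[|[|//]]] ? /=;
  rewrite ?dphi1 ?dphi2 ?expr0 ?expr1; field; exact: s_neq0.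
Qed.

End MassStiffness.

Lemma eig1_dim_invmx_mul (R : realType) n (B C : 'M[R]_n) : B \in unitmx ->
  eig1_dim (invmx B *m C) = \rank (kermx (C - B)).
Proof.
move=> uB; rewrite /eig1_dim -(mulVmx uB) -mulmxBr trmx_mul !mxrank_ker.
by rewrite mxrankMfree ?mxrank_tr // row_free_unit unitmx_tr unitmx_inv.
Qed.

Lemma Amat_sub_Atilde (R : realType) N (kappa : R) :
  Amat N kappa - Atilde N kappa =
  massM R N *t (stiffS R N - invmx (massM R N))
  + (stiffS R N - invmx (massM R N)) *t massM R N.
Proof. by apply/matrixP => i j; rewrite !mxE; ring. Qed.

Theorem mainTheorem8 (R : realType) (N : nat) (kappa : R) :
  (4 <= N)%N ->
  Atilde N kappa \in unitmx ->
  eig1_dim (invmx (Atilde N kappa) *m Amat N kappa) = ((N - 3) ^ 2)%N.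
Proof.
move=> le4N uAt; have le2n : (2 <= N - 1)%N by lia.
have PQ := psi_dphi_coord R N.
have rank_QE := rank_dphi_coord_eval R le2n.
rewrite eig1_dim_invmx_mul // Amat_sub_Atilde massM_gram stiffS_gram.
rewrite (gram_sub_inv_gram PQ) mxrank_ker_tens_gram_sum ?(gram_unit_biorth PQ) //.
rewrite mxrank_ker mxrank_gram.
rewrite (mxrank_biorth_residual PQ _ (psi_coord_eval R N) rank_QE) //.
by congr (_ ^ 2)%N; lia.
Qed.
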